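(* Let $\mathbb{K}$ be a field and let $f,g,u,v$ be endomorphisms of the additive group $(\mathbb{K},+)$ such that $$\forall (x,t)\in\mathbb{K}^2,\quad g(t^2x)+v(tx)=t\,f(x)+t\,u(tx).$$ (a) If $\mathbb{K}$ has characteristic not $2$, there are scalars $\lambda,\mu$ such that $f(x)=\lambda x$, $u(x)=\mu x$, $v(x)=\lambda x$ and $g(x)=\mu x$ for all $x$. (b) If $\mathbb{K}$ has characteristic $2$, there are scalars $\lambda,\mu$ and a root-linear form $\alpha$ on $\mathbb{K}$ such that $f(x)=\lambda x+\alpha(x)$, $u(x)=\mu x$, $v(x)=\lambda x$ and $g(x)=\mu x+\alpha(x)$ for all $x$.
   Context: In characteristic $2$, a root-linear form on $\mathbb{K}$ is an additive map $\alpha:\mathbb{K}\to\mathbb{K}$ with $\alpha(\lambda^2x)=\lambda\alpha(x)$ for all $\lambda,x\in\mathbb{K}$. *)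

From HB Require Import structures.
From mathcomp Require Import all_boot all_order all_algebra.
Set Implicit Arguments. Unset Strict Implicit. Unset Printing Implicit Defensive.
Import GRing.Theory.
Local Open Scope ring_scope.

Definition additive_map (K : fieldType) (f : K -> K) : Prop :=
  forall x y : K, f (x + y) = f x + f y.

Definition root_linear (K : fieldType) (a : K -> K) : Prop :=
  additive_map a /\ forall l x : K, a (l ^+ 2 * x) = l * a x.

From HB Require Import structures.
From mathcomp Require Import all_boot all_order all_algebra ring.
Import GRing.Theory.
Local Open Scope ring_scope.
Set Implicit Arguments. Unset Strict Implicit.

(* Proof of Lemma 3.1: the identity
     g (t^2 x) + v (t x) = t f (x) + t u (t x)                      (E)
   for additive f, g, u, v on a field K.

   At t = 1, (E) gives g + v = f + u.
   - If char K <> 2, comparing (E) at t and -t separates the parts that are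
     odd and even in t: v (t x) = t f (x) and g (t^2 x) = t u (t x); so
     f = v and g = u are linear.
   - If char K = 2, (t + 1)^2 = t^2 + 1, and comparing (E) at t + 1, t, 1
     shows that u is linear, u (x) = m x.  Then a := g - m id satisfies the
     "twisted" equation a (t^2 x) + v (t x) = t a (x) + t v (x).
   The heart of the argument, valid over any field, is that this twisted
   equation forces v to be linear: the defect w(t, y) := v (t y) - t v (y)
   satisfies two cocycle rules, whose comparison makes w(t, .) constant on
   nonzero elements; being additive, w(t, .) then vanishes.  Once v is
   linear, the twisted equation says precisely that a is root-linear. *)

Lemma additive_map0 (K : fieldType) (f : K -> K) : additive_map f -> f 0 = 0.
Proof. by move=> hf; apply: (addrI (f 0)); rewrite -hf !addr0. Qed.

Lemma additive_mapN (K : fieldType) (f : K -> K) (x : K) :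
  additive_map f -> f (- x) = - f x.
Proof.
by move=> hf; apply: (addrI (f x)); rewrite -hf !subrr (additive_map0 hf).
Qed.

(* Adding and subtracting the two instances of a relation a +- b = +-c + d
   isolates twice its odd part b - c and twice its even part a - d. *)
Lemma odd_even_parts (R : comPzRingType) (a b c d : R) :
  a + b = c + d -> a - b = - c + d -> (b - c) *+ 2 = 0 /\ (a - d) *+ 2 = 0.
Proof.
move=> Eplus Eminus; split.
- have -> : (b - c) *+ 2 = (a + b - (c + d)) - (a - b - (- c + d)) by ring.
  by rewrite Eplus Eminus !subrr.
- have -> : (a - d) *+ 2 = (a + b - (c + d)) + (a - b - (- c + d)) by ring.
  by rewrite Eplus Eminus !subrr addr0.
Qed.

Lemma double_eq0 (K : fieldType) (x : K) :
  ~ 2%N \in [pchar K] -> x *+ 2 = 0 -> x = 0.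
Proof.
move=> not_pchar2 /eqP; rewrite -mulr_natr mulf_eq0 => /orP[/eqP // | two0].
by case: not_pchar2; rewrite inE /= two0.
Qed.

Lemma sqrrD1_pchar2 (K : fieldType) (t : K) :
  2%N \in [pchar K] -> (t + 1) ^+ 2 = t ^+ 2 + 1.
Proof. by move=> pchar2; rewrite sqrrD1 mulr2n addrr_pchar2 // addr0. Qed.

Section LinearDefect.

Variables (K : fieldType) (v : K -> K).

Definition linear_defect (t y : K) : K := v (t * y) - t * v y.

Lemma linear_defect_cocycle (t s y : K) :
  linear_defect (t * s) y = linear_defect t (s * y) + t * linear_defect s y.
Proof. by rewrite /linear_defect -mulrA; ring. Qed.

Hypothesis hv : additive_map v.

Lemma linear_defect_additive (t y z : K) :
  linear_defect t (y + z) = linear_defect t y + linear_defect t z.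
Proof. by rewrite /linear_defect mulrDr !hv; ring. Qed.

(* An additive defect that is constant on nonzero elements vanishes; the
   cases t = 0 and t = -1, where t + 1 = 0 cannot serve as a witness, are
   direct. *)
Lemma linear_defect_vanish (t : K) :
  (forall s, s != 0 -> linear_defect t s = linear_defect t 1) ->
  linear_defect t 1 = 0.
Proof.
move=> defect_const.
have [-> | t_neq0] := eqVneq t 0.
  by rewrite /linear_defect !mul0r (additive_map0 hv) subr0.
have [-> | t_neqN1] := eqVneq t (-1).
  by rewrite /linear_defect mulr1 (additive_mapN _ hv) mulN1r subrr.
have tD1_neq0 : t + 1 != 0 by rewrite addr_eq0.
have := linear_defect_additive t t 1.
rewrite (defect_const _ tD1_neq0) (defect_const _ t_neq0) => doubled.
by apply: (addrI (linear_defect t 1)); rewrite -doubled addr0.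
Qed.

Variable a : K -> K.
Hypothesis twisted : forall x t, a (t ^+ 2 * x) + v (t * x) = t * a x + t * v x.

Lemma linear_defect_twisted (t y : K) :
  linear_defect t y = t * a y - a (t ^+ 2 * y).
Proof.
apply/eqP; rewrite -subr_eq0 /linear_defect.
have -> : v (t * y) - t * v y - (t * a y - a (t ^+ 2 * y)) =
  a (t ^+ 2 * y) + v (t * y) - (t * a y + t * v y) by ring.
by rewrite twisted subrr.
Qed.

(* Computing the defect of t * s through the twisted form gives a second
   cocycle rule, with s^2 y in place of s y. *)
Lemma linear_defect_sq_invariant (t s y : K) :
  linear_defect t (s * y) = linear_defect t (s ^+ 2 * y).
Proof.
apply: (addIr (t * linear_defect s y)); rewrite -linear_defect_cocycle.
by rewrite !linear_defect_twisted exprMn [t ^+ 2 * (s ^+ 2 * y)]mulrA; ring.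
Qed.

Lemma linear_defect_const (t s : K) :
  s != 0 -> linear_defect t s = linear_defect t 1.
Proof.
move=> s_neq0; have := linear_defect_sq_invariant t s s^-1.
by rewrite expr2 -mulrA !mulfV // mulr1 => ->.
Qed.

Lemma twisted_linear (z : K) : v z = z * v 1.
Proof.
apply/eqP; rewrite -subr_eq0 -{1}[z]mulr1; apply/eqP.
exact/linear_defect_vanish/linear_defect_const.
Qed.

Lemma twisted_root_linear (l x : K) : a (l ^+ 2 * x) = l * a x.
Proof.
have := twisted x l; rewrite (twisted_linear (l * x)) (twisted_linear x) -mulrA.
by move/(canRL (addrK _)); rewrite addrK.
Qed.

End LinearDefect.

Section FunctionalEquation.

Variables (K : fieldType) (f g u v : K -> K).
Hypotheses (hg : additive_map g) (hu : additive_map u) (hv : additive_map v).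
Hypothesis H : forall x t : K, g (t ^+ 2 * x) + v (t * x) = t * f x + t * u (t * x).

Lemma equation_at_one (x : K) : g x + v x = f x + u x.
Proof. by have := H x 1; rewrite expr1n !mul1r. Qed.

(* Outside characteristic 2: the parts of (E) odd and even in t. *)
Lemma odd_even_equations (t x : K) : ~ 2%N \in [pchar K] ->
  v (t * x) = t * f x /\ g (t ^+ 2 * x) = t * u (t * x).
Proof.
move=> not_pchar2; have Hminus := H x (- t).
rewrite sqrrN !mulNr (additive_mapN _ hv) (additive_mapN _ hu) in Hminus.
rewrite mulrN opprK in Hminus.
have [odd_part even_part] := odd_even_parts (H x t) Hminus.
by split; apply/eqP; rewrite -subr_eq0; apply/eqP/(double_eq0 not_pchar2).
Qed.

Lemma odd_char_solution : ~ 2%N \in [pchar K] ->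
  exists l m : K, forall x : K,
    [/\ f x = l * x, u x = m * x, v x = l * x & g x = m * x].
Proof.
move=> not_pchar2.
have v_lin x : v x = x * f 1.
  by have [<- _] := odd_even_equations x 1 not_pchar2; rewrite mulr1.
have f_eq_v x : f x = v x.
  by have [e _] := odd_even_equations 1 x not_pchar2; rewrite !mul1r in e.
have g_eq_u x : g x = u x.
  by have [_ e] := odd_even_equations 1 x not_pchar2; rewrite expr1n !mul1r in e.
have u_lin x : u x = u 1 * x.
  have [-> | x_neq0] := eqVneq x 0; first by rewrite mulr0 (additive_map0 hu).
  have [_ e] := odd_even_equations x x^-1 not_pchar2.
  by rewrite g_eq_u expr2 -mulrA !mulfV // mulr1 in e; rewrite e mulrC.
exists (f 1), (u 1) => x.
by split; [rewrite f_eq_v v_lin mulrC | exact: u_lin | rewrite v_lin mulrC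
  | rewrite g_eq_u u_lin].
Qed.

(* In characteristic 2, comparing (E) at t + 1, t and 1 shows that u is
   linear. *)
Lemma u_linear_pchar2 (t x : K) : 2%N \in [pchar K] -> u (t * x) = t * u x.
Proof.
move=> pchar2; have Hsucc := H x (t + 1).
rewrite sqrrD1_pchar2 // mulrDl mul1r hg mulrDl mul1r hv hu in Hsucc.
apply/eqP; rewrite -subr_eq0 (oppr_pchar2 pchar2); apply/eqP.
have -> : u (t * x) + t * u x =
    (g (t ^+ 2 * x) + v (t * x) - (t * f x + t * u (t * x)))
  + (g x + v x - (f x + u x))
  - (g (t ^+ 2 * x) + g x + (v (t * x) + v x) -
     ((t + 1) * f x + (t + 1) * (u (t * x) + u x))) by ring.
by rewrite Hsucc H equation_at_one !subrr addr0 subrr.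
Qed.

Lemma twisted_pchar2 (m : K) : (forall x, u x = m * x) ->
  forall x t, (g (t ^+ 2 * x) - m * (t ^+ 2 * x)) + v (t * x) =
              t * (g x - m * x) + t * v x.
Proof.
move=> u_lin x t; have Ht := H x t; have H1 := equation_at_one x.
rewrite u_lin in Ht; rewrite u_lin in H1.
apply/eqP; rewrite -subr_eq0; apply/eqP.
have -> : g (t ^+ 2 * x) - m * (t ^+ 2 * x) + v (t * x) -
    (t * (g x - m * x) + t * v x) =
  (g (t ^+ 2 * x) + v (t * x) - (t * f x + t * (m * (t * x))))
  - t * (g x + v x - (f x + m * x)) by ring.
by rewrite Ht H1 !subrr mulr0 subr0.
Qed.

Lemma even_char_solution : 2%N \in [pchar K] ->
  exists (l m : K) (a : K -> K), root_linear a /\ forall x : K,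
    [/\ f x = l * x + a x, u x = m * x, v x = l * x & g x = m * x + a x].
Proof.
move=> pchar2.
have u_lin x : u x = u 1 * x by rewrite -{1}[x]mulr1 u_linear_pchar2 // mulrC.
pose a x := g x - u 1 * x.
have twisted : forall x t, a (t ^+ 2 * x) + v (t * x) = t * a x + t * v x.
  exact: twisted_pchar2 u_lin.
have v_lin := twisted_linear hv twisted.
exists (v 1), (u 1), a; split; first split.
- by move=> x y; rewrite /a hg; ring.
- exact (twisted_root_linear hv twisted).
move=> x; have H1 := equation_at_one x; rewrite u_lin v_lin in H1.
split; [| exact: u_lin | by rewrite v_lin mulrC | by rewrite /a; ring].
by apply: (addIr (u 1 * x)); rewrite -H1 /a; ring.
Qed.

End FunctionalEquation.

Theorem lemma3p1 (K : fieldType) (f g u v : K -> K)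
  (hf : additive_map f) (hg : additive_map g)
  (hu : additive_map u) (hv : additive_map v)
  (H : forall x t : K, g (t ^+ 2 * x) + v (t * x) = t * f x + t * u (t * x)) :
  (~ (2%N \in [pchar K]) ->
     exists l m : K, forall x : K,
       [/\ f x = l * x, u x = m * x, v x = l * x & g x = m * x]) /\
  (2%N \in [pchar K] ->
     exists (l m : K) (a : K -> K), root_linear a /\ forall x : K,
       [/\ f x = l * x + a x, u x = m * x, v x = l * x & g x = m * x + a x]).
Proof.
split; [exact: odd_char_solution hu hv H | exact: even_char_solution hg hu hv H].
Qed.
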